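(* Let $(X,d)$ be a sequentially right $K$-complete quasi-pseudometric space and $\varphi:X\to\mathbb{R}\cup\{\infty\}$ a proper, bounded below, nearly lower semicontinuous function. For $x\in X$ let $S(x)=\{y\in X:\varphi(y)+d(y,x)\le\varphi(x)\}$. Then there exists $z\in X$ such that $\varphi(y)=\varphi(z)$ for all $y\in S(z)$. Moreover, for such $z$ and every $y\in S(z)$: (i) $S(y)\subseteq\overline{\{y\}}$, and (ii) $\varphi(y)<\varphi(x)+d(x,y)$ for all $x\in X\setminus S(y)$.
   Context: A quasi-pseudometric on $X$ is $d:X\times X\to[0,\infty)$ with $d(x,x)=0$ and $d(x,z)\le d(x,y)+d(y,z)$ (no symmetry). Topology $\tau_d$: neighbourhood base at $x$ given by $\{y:d(x,y)<r\}$, $r>0$; $x_n\to x$ iff $d(x,x_n)\to0$; $\overline{\{y\}}=\{x:d(x,y)=0\}$. A sequence $(x_n)$ is right $K$-Cauchy if for every $\varepsilon>0$ there is $n_\varepsilon$ with $d(x_{n+k},x_n)<\varepsilon$ for all $n\ge n_\varepsilon$, $k\in\mathbb{N}$; $X$ is sequentially right $K$-complete if every right $K$-Cauchy sequence converges. $\varphi$ proper means $\varphi(x)<\infty$ for some $x$. $\varphi$ is nearly lower semicontinuous if $\varphi(x)\le\liminf_n\varphi(x_n)$ for every sequence with pairwise distinct terms converging to $x$. *)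

From HB Require Import structures.
From mathcomp Require Import all_boot all_order all_algebra.
From mathcomp Require Import all_classical all_reals.
From mathcomp Require Import sequences.
Set Implicit Arguments. Unset Strict Implicit. Unset Printing Implicit Defensive.
Import Order.TTheory GRing.Theory Num.Theory.
Local Open Scope classical_set_scope.
Local Open Scope ring_scope.

Section QPM.
Variables (R : realType) (X : Type).

Definition quasi_pseudometric (d : X -> X -> R) : Prop :=
  [/\ forall x y, 0 <= d x y,
      forall x, d x x = 0 &
      forall x y z, d x z <= d x y + d y z].

(* convergence in tau_d : x_n -> x iff d(x, x_n) -> 0 *)
Definition qconv (d : X -> X -> R) (u : nat -> X) (x : X) : Prop :=
  forall eps : R, 0 < eps -> exists N : nat, forall n : nat, (N <= n)%N -> d x (u n) < eps.

Definition right_K_Cauchy (d : X -> X -> R) (u : nat -> X) : Prop :=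
  forall eps : R, 0 < eps -> exists N : nat, forall n k : nat, (N <= n)%N -> d (u (n + k)%N) (u n) < eps.

Definition seq_right_K_complete (d : X -> X -> R) : Prop :=
  forall u : nat -> X, right_K_Cauchy d u -> exists x, qconv d u x.

(* closure of a singleton in tau_d *)
Definition qclosure1 (d : X -> X -> R) (y : X) : set X := [set x | d x y = 0].

Definition proper_fun (phi : X -> \bar R) : Prop := exists x, (phi x < +oo)%E.

Definition bounded_below (phi : X -> \bar R) : Prop := exists m : R, forall x, (m%:E <= phi x)%E.

Definition nearly_lsc (d : X -> X -> R) (phi : X -> \bar R) : Prop :=
  forall (u : nat -> X) (x : X),
    (forall n m : nat, n <> m -> u n <> u m) -> qconv d u x ->
    (phi x <= limn_einf (fun n => phi (u n)))%E.

Definition Sset (d : X -> X -> R) (phi : X -> \bar R) (x : X) : set X :=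
  [set y | (phi y + (d y x)%:E <= phi x)%E].

End QPM.

(* Suppose no point z has phi constant on S(z). Then every S(z) contains a
   point of strictly smaller value, and S is transitive, so one can choose
   u_{n+1} in S(u_n) with phi(u_{n+1}) < phi(u_n) and phi(u_{n+1}) within
   1/(n+1) of the infimum of phi over S(u_n).  Because u_{n+k} lies in both
   S(u_n) and S(u_{n-1}), d(u_{n+k}, u_n) <= phi(u_n) - phi(u_{n+k}) <= 1/n,
   so (u_n) is right K-Cauchy; its terms are pairwise distinct, so near lower
   semicontinuity and the triangle inequality put its limit x in every
   S(u_n).  For y in S(x) we then get phi(x) <= phi(u_{n+1}) <= phi(y) + 1/(n+1),
   so phi is constant on S(x), a contradiction.  At such a point z, phi(z) is
   finite (otherwise S(z) = X would contain a point of finite value), and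
   (i) follows from transitivity of S, while (ii) is the negation of
   x in S(y). *)

From HB Require Import structures.
From mathcomp Require Import all_boot all_order all_algebra.
From mathcomp Require Import all_classical all_reals.
From mathcomp Require Import sequences.
From mathcomp Require Import ereal normedtype lra.

Set Implicit Arguments.
Unset Strict Implicit.
Unset Printing Implicit Defensive.

Import Order.TTheory GRing.Theory Num.Theory.
Local Open Scope classical_set_scope.
Local Open Scope ring_scope.

Lemma dependent_choice (T : Type) (P : nat -> T -> T -> Prop) (x0 : T) :
  (forall n x, exists y, P n x y) ->
  exists u : nat -> T, u 0%N = x0 /\ forall n, P n (u n) (u n.+1).
Proof.
move=> P_total; have [f Pf] := choice (fun p : nat * T => P_total p.1 p.2).
exists (fix u n := if n is n'.+1 then f (n', u n') else x0).
by split => // n; exact: (Pf (n, _)).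
Qed.

Section ereal_inf_lemmas.
Variable R : realType.
Local Open Scope ereal_scope.

Lemma limn_einf_le (u : (\bar R)^nat) (c : \bar R) :
  (\forall n \near \oo, u n <= c) -> limn_einf u <= c.
Proof.
move=> [N _ uNc]; apply: le_trans (limn_einf_sup u) _.
apply: ge_ereal_inf; exists (ereal_sup (u @` [set n | (N <= n)%N])).
  by exists [set n | (N <= n)%N] => //; exists N.
by apply: ub_ereal_sup => _ [n Nn <-]; exact: uNc.
Qed.

Lemma exists_near_ereal_inf (T : Type) (f : T -> \bar R) (A : set T)
    (m : R) (c : \bar R) (eps : R) :
  (forall x, A x -> m%:E <= f x) -> (exists2 y, A y & f y < c) -> (0 < eps)%R ->
  exists2 y, A y & f y < c /\ forall w, A w -> f y <= f w + eps%:E.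
Proof.
move=> f_lb [y0 Ay0 fy0_lt] eps_gt0; set I := ereal_inf (f @` A).
have I_lt : I < c by apply: le_lt_trans fy0_lt; apply: ereal_inf_lbound; exists y0.
have I_fin : I \is a fin_num.
  apply/fin_numPlt/andP; split; last exact: lt_le_trans I_lt (leey c).
  apply: lt_le_trans (ltNyr m) _.
  by apply: le_ereal_inf_tmp => _ [x Ax <-]; exact: f_lb.
have : I < Order.min c (I + eps%:E).
  by rewrite lt_min I_lt lteDl // lte_fin.
move=> /ereal_inf_lt[_ [y Ay <-]]; rewrite lt_min => /andP[fy_lt fy_near].
exists y => //; split => // w Aw; apply: le_trans (ltW fy_near) _.
by rewrite leeD2r //; apply: ereal_inf_lbound; exists w.
Qed.

End ereal_inf_lemmas.

Section Sset.
Variables (R : realType) (X : Type) (d : X -> X -> R) (phi : X -> \bar R).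
Hypothesis d_ge0 : forall x y, 0 <= d x y.
Hypothesis d_refl : forall x, d x x = 0.
Hypothesis d_triangle : forall x y z, d x z <= d x y + d y z.
Hypothesis phi_bounded : bounded_below phi.
Local Open Scope ereal_scope.

Definition const_on_Sset (z : X) : Prop :=
  forall y, Sset d phi z y -> phi y = phi z.

Lemma Sset_refl x : Sset d phi x x.
Proof. by rewrite /Sset /= d_refl adde0. Qed.

Lemma Sset_trans x y w : Sset d phi x y -> Sset d phi y w -> Sset d phi x w.
Proof.
rewrite /Sset /= => Sxy Syw; apply: le_trans (le_trans (leeD2r _ Syw) Sxy).
by rewrite -addeA -EFinD leeD2l // lee_fin.
Qed.

Lemma Sset_phi_le x y : Sset d phi x y -> phi y <= phi x.
Proof. by apply: le_trans; rewrite leeDl // lee_fin. Qed.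

Lemma notin_Sset_lt y x : ~ Sset d phi y x -> phi y < phi x + (d x y)%:E.
Proof. by rewrite ltNge => /negP. Qed.

Lemma fin_num_phi x : phi x < +oo -> phi x \is a fin_num.
Proof.
have [m phi_ge] := phi_bounded.
by move=> phi_lty; apply/fin_numPlt; rewrite phi_lty (lt_le_trans (ltNyr m)).
Qed.

Lemma const_on_Sset_lty z : proper_fun phi -> const_on_Sset z -> phi z < +oo.
Proof.
move=> [x0 phi_x0] z_const; rewrite ltey; apply/eqP => phi_z.
have : Sset d phi z x0 by rewrite /Sset /= phi_z leey.
by move=> /z_const phi_x0_z; move: phi_x0; rewrite phi_x0_z phi_z ltxx.
Qed.

Lemma const_on_Sset_closure z y : proper_fun phi -> const_on_Sset z ->
  Sset d phi z y -> Sset d phi y `<=` qclosure1 d y.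
Proof.
move=> phi_proper z_const Szy w Syw.
have phi_y : phi y = phi z by exact: z_const.
have phi_w : phi w = phi z by apply: z_const; exact: Sset_trans Syw.
have phi_z_fin := fin_num_phi (const_on_Sset_lty phi_proper z_const).
move: Syw; rewrite /Sset /= phi_y phi_w -[X in _ <= X]adde0 leeD2lE //.
by rewrite lee_fin => dwy_le0; apply/eqP; rewrite eq_le dwy_le0 d_ge0.
Qed.

Lemma not_const_on_Sset_lt z :
  ~ const_on_Sset z -> exists2 y, Sset d phi z y & phi y < phi z.
Proof.
move=> /existsNP[y /not_implyP[Szy phi_yz]]; exists y => //.
by rewrite lt_neqAle Sset_phi_le // andbT; exact/eqP.
Qed.

Definition descent_seq (u : nat -> X) : Prop :=
  [/\ phi (u 0%N) < +oo,
      forall n, Sset d phi (u n) (u n.+1),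
      forall n, phi (u n.+1) < phi (u n) &
      forall n w, Sset d phi (u n) w -> phi (u n.+1) <= phi w + (n.+1%:R^-1)%:E].

Section DescentSeq.
Variable u : nat -> X.
Hypothesis u_descent : descent_seq u.

Let u0_lty : phi (u 0%N) < +oo. Proof. by case: u_descent. Qed.
Let u_Sset n : Sset d phi (u n) (u n.+1). Proof. by case: u_descent. Qed.
Let u_lt n : phi (u n.+1) < phi (u n). Proof. by case: u_descent. Qed.
Let u_near_inf n w :
  Sset d phi (u n) w -> phi (u n.+1) <= phi w + (n.+1%:R^-1)%:E.
Proof. by case: u_descent => _ _ _; apply. Qed.

Lemma Sset_descent n m : (n <= m)%N -> Sset d phi (u n) (u m).
Proof.
apply: (homo_leq (r := Sset d phi)) => // [x|y x z].
  exact: Sset_refl.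
exact: Sset_trans.
Qed.

Lemma phi_descent_ltn n m : (n < m)%N -> phi (u m) < phi (u n).
Proof.
apply: (homo_ltn (r := fun a b => phi b < phi a)) => // a b c.
by move=> /[swap]; exact: lt_trans.
Qed.

Lemma descent_inj : injective u.
Proof.
move=> n m unm.
by case: (ltngtP n m) => // /phi_descent_ltn; rewrite unm ltxx.
Qed.

Lemma fin_num_phi_descent n : phi (u n) \is a fin_num.
Proof.
apply: fin_num_phi; apply: le_lt_trans u0_lty.
exact: Sset_phi_le (Sset_descent (leq0n n)).
Qed.

Lemma right_K_Cauchy_descent : right_K_Cauchy d u.
Proof.
move=> eps eps_gt0; have [N _ N_lt] := near_infty_natSinv_lt (PosNum eps_gt0).
exists N.+1 => -[//|n] k /= Nn; set m := (n.+1 + k)%N.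
have : phi (u m) + (d (u m) (u n.+1))%:E <= phi (u m) + (n.+1%:R^-1)%:E.
  apply: le_trans (Sset_descent (leq_addr k n.+1)) _.
  apply: u_near_inf; apply: Sset_descent.
  exact: leq_trans (leqnSn n) (leq_addr k n.+1).
rewrite leeD2lE; last exact: fin_num_phi_descent.
rewrite lee_fin => /le_lt_trans; apply.
exact: N_lt.
Qed.

Lemma Sset_descent_limit x : nearly_lsc d phi -> qconv d u x ->
  forall n, Sset d phi (u n) x.
Proof.
move=> phi_nlsc ux n.
have phi_x_le eps : (0 < eps)%R ->
    phi x <= phi (u n) - (d x (u n))%:E + eps%:E.
  move=> eps_gt0; apply: le_trans (phi_nlsc _ _ _ ux) _.
    by move=> i j /[swap] /descent_inj.
  apply: limn_einf_le; have [N uN_near] := ux _ eps_gt0.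
  exists (maxn n N) => // k; rewrite /= geq_max => /andP[nk Nk].
  move: (Sset_descent nk); rewrite /Sset /=.
  rewrite -(fineK (fin_num_phi_descent k)) -(fineK (fin_num_phi_descent n)).
  rewrite -!EFinD !lee_fin.
  by have := d_triangle x (u k) (u n); have := uN_near k Nk; lra.
have : phi x <= phi (u n) - (d x (u n))%:E by exact/lee_addgt0Pr.
by rewrite leeBrDr.
Qed.

Lemma const_on_Sset_descent_limit x :
  (forall n, Sset d phi (u n) x) -> const_on_Sset x.
Proof.
move=> Sx y Sxy; apply/eqP; rewrite eq_le Sset_phi_le //=.
apply/lee_addgt0Pr => eps eps_gt0.
have [N _ N_lt] := near_infty_natSinv_lt (PosNum eps_gt0).
apply: le_trans (Sset_phi_le (Sx N.+1)) _.
apply: le_trans (u_near_inf (Sset_trans (Sx N) Sxy)) _.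
by apply: leeD2l; rewrite lee_fin; apply/ltW/N_lt => /=.
Qed.

End DescentSeq.

Lemma exists_const_on_Sset : seq_right_K_complete d -> proper_fun phi ->
  nearly_lsc d phi -> exists z, const_on_Sset z.
Proof.
move=> d_complete [x0 phi_x0] phi_nlsc; apply: contrapT => no_const.
have near_inf_step n x : exists y, Sset d phi x y /\ phi y < phi x /\
    forall w, Sset d phi x w -> phi y <= phi w + (n.+1%:R^-1)%:E.
  have [m phi_ge] := phi_bounded.
  have x_nconst : ~ const_on_Sset x by move=> x_const; apply: no_const; exists x.
  have inv_gt0 : (0 < n.+1%:R^-1 :> R)%R by rewrite invr_gt0.
  have [y Sxy y_near] := exists_near_ereal_inf (fun w _ => phi_ge w)
    (not_const_on_Sset_lt x_nconst) inv_gt0.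
  by exists y.
have [u [u0 u_step]] := dependent_choice x0 near_inf_step.
have u_descent : descent_seq u.
  by split=> [|n|n|n]; rewrite ?u0 //; have [? [? ?]] := u_step n.
have [x ux] := d_complete u (right_K_Cauchy_descent u_descent).
apply: no_const; exists x; apply: (const_on_Sset_descent_limit u_descent).
exact: (Sset_descent_limit u_descent phi_nlsc ux).
Qed.

End Sset.

Theorem theorem3p2 (R : realType) (X : Type) (d : X -> X -> R) (phi : X -> \bar R) :
  quasi_pseudometric d -> seq_right_K_complete d ->
  proper_fun phi -> bounded_below phi -> nearly_lsc d phi ->
  (exists z : X, forall y, Sset d phi z y -> phi y = phi z) /\
  (forall z : X, (forall y, Sset d phi z y -> phi y = phi z) ->
     forall y, Sset d phi z y ->
       Sset d phi y `<=` qclosure1 d y /\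
       (forall x, ~ Sset d phi y x -> (phi y < phi x + (d x y)%:E)%E)).
Proof.
move=> [d_ge0 d_refl d_triangle] d_complete phi_proper phi_bounded phi_nlsc.
split; first exact: exists_const_on_Sset.
move=> z z_const y Szy; split; last exact: notin_Sset_lt.
exact: const_on_Sset_closure z_const Szy.
Qed.
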